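(* Let $n\ge2$ and consider an equation $\sum_{i,j=1}^n f_{ij}({\bf p})u_{x_ix_j}=0$, $p^i=u_{x_i}$, with $(f_{ij})$ symmetric and nondegenerate, with inverse $(f^{ij})$. Define $$s_k=\frac{f^{ij}}{(n+2)(1-n)}\left(\partial_kf_{ij}-n\,\partial_jf_{ik}\right),\qquad c_k=\frac{f^{ij}}{(n+2)(n-1)}\left((n+3)\partial_kf_{ij}-2(n+1)\partial_jf_{ik}\right),$$ $$a_{ijk}=\partial_kf_{ij}-(c_k+2s_k)f_{ij}-s_if_{kj}-s_jf_{ki},$$ where $\partial_k=\partial/\partial p^k$ and repeated indices are summed. The equation is linearizable by a transformation from the equivalence group $SL(n+1,\mathbb{R})$ if and only if (1) $a_{ijk}=0$ identically, and (2) $\partial_js_i-s_is_j=0$ for all $i,j$ (equivalently, the connection with Christoffel symbols $\Gamma^i_{jk}=s_j\delta^i_k+s_k\delta^i_j$ is flat).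
   Context: The equivalence group consists of transformations $\tilde{\bf x}=C{\bf x}+bu$, $\tilde u=c{\bf x}+\beta u$ with the corresponding $(n+1)\times(n+1)$ matrix in $SL(n+1,\mathbb{R})$; they act on the row vector ${\bf p}=(p^1,\dots,p^n)$ projectively by $\tilde{\bf p}=\kappa{\bf p}C^{-1}+cC^{-1}$, $\kappa=1/\det(C+b{\bf p})$, and on $F=(f_{ij})$ by $\tilde F=\kappa^{-1}(C+b{\bf p})F(C+b{\bf p})^t$. Linearizable means that the transformed coefficient matrix is proportional (by a function) to a constant matrix. *)

From HB Require Import structures.
From mathcomp Require Import all_boot all_order all_algebra.
From mathcomp Require Import all_classical all_reals all_analysis.
Set Implicit Arguments. Unset Strict Implicit. Unset Printing Implicit Defensive.
Import Order.TTheory GRing.Theory Num.Theory.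
Import numFieldNormedType.Exports.
Local Open Scope classical_set_scope.
Local Open Scope ring_scope.

Section Defs.
Variables (R : realType) (n : nat).

Definition ebasis (k : 'I_n) : 'rV[R]_n := delta_mx 0 k.

Definition pd (k : 'I_n) (g : 'rV[R]_n -> R) : 'rV[R]_n -> R :=
  fun p => derive g p (ebasis k).

Fixpoint iterpd (ks : seq 'I_n) (g : 'rV[R]_n -> R) : 'rV[R]_n -> R :=
  match ks with
  | [::] => g
  | k :: ks' => pd k (iterpd ks' g)
  end.

Definition smooth_on (U : set 'rV[R]_n) (g : 'rV[R]_n -> R) : Prop :=
  forall (ks : seq 'I_n) (p : 'rV[R]_n), U p -> differentiable (iterpd ks g) p.

Variable F : 'rV[R]_n -> 'M[R]_n.

Definition fent (i j : 'I_n) : 'rV[R]_n -> R := fun p => F p i j.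

Definition s_coef (k : 'I_n) : 'rV[R]_n -> R := fun p =>
  ((n.+2)%:R * (1 - n%:R))^-1 *
  \sum_(i < n) \sum_(j < n)
     invmx (F p) i j * (pd k (fent i j) p - n%:R * pd j (fent i k) p).

Definition c_coef (k : 'I_n) : 'rV[R]_n -> R := fun p =>
  ((n.+2)%:R * (n%:R - 1))^-1 *
  \sum_(i < n) \sum_(j < n)
     invmx (F p) i j * ((n.+3)%:R * pd k (fent i j) p
                        - 2 * (n.+1)%:R * pd j (fent i k) p).

Definition a_coef (i j k : 'I_n) : 'rV[R]_n -> R := fun p =>
  pd k (fent i j) p - (c_coef k p + 2 * s_coef k p) * F p i j
  - s_coef i p * F p k j - s_coef j p * F p k i.

(* transformed coefficient matrix under the SL(n+1) element with upper blocks
   C (n x n) and b (n x 1):  kappa^{-1} (C + b p) F (C + b p)^T,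
   kappa = 1 / det (C + b p) *)
Definition Ftrans (C : 'M[R]_n) (b : 'M[R]_(n, 1)) (p : 'rV[R]_n) : 'M[R]_n :=
  \det (C + b *m p) *: ((C + b *m p) *m F p *m (C + b *m p)^T).

(* the equation is linearizable on the set V by a single element
   [[C, b], [c, beta]] of the equivalence group SL(n+1,R): on V the transformed
   coefficient matrix is proportional (by a function) to a constant matrix K *)
Definition linearizable_on (V : set 'rV[R]_n) : Prop :=
  exists (C : 'M[R]_n) (b : 'M[R]_(n, 1)) (c : 'rV[R]_n) (beta : R),
    \det (block_mx C b c beta%:M : 'M[R]_(n + 1)) = 1 /\
    exists (K : 'M[R]_n) (lambda : 'rV[R]_n -> R),
      forall p, V p ->
        (C + b *m p) \in unitmx /\ Ftrans C b p = lambda p *: K.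

End Defs.

From HB Require Import structures.
From mathcomp Require Import all_boot all_order all_algebra.
From mathcomp Require Import all_classical all_reals all_analysis.
From mathcomp Require Import ring lra.
Import Order.TTheory GRing.Theory Num.Theory.
Import numFieldNormedType.Exports.
Local Open Scope classical_set_scope.
Local Open Scope ring_scope.
Set Implicit Arguments. Unset Strict Implicit. Unset Printing Implicit Defensive.

(* Write [M(p) = C + b p] for the upper blocks of an element of SL(n+1) and
   [G = M F M^T].  The equation is linearized by it near a point iff [G] is
   proportional to a constant matrix there, i.e. iff [∂_k G = γ_k G].  Since
   [∂_k M = b e_k], this says that [∂_k f_ij = γ_k f_ij + s_i f_kj + s_j f_ki]
   with [M s = -b]; contracting with [f^ij] identifies this [s] with the [s_k]
   of the statement and [γ_k] with [c_k + 2 s_k], hence [a_ijk = 0].  Moreover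
   [s = -M^-1 b = -β / (1 + (p - p0) β)], whose derivative is [s_i s_j].
   Conversely, flatness forces [s(p) (1 - (p - p0) s(p0)) = s(p0)] on a ball
   (uniqueness for linear ODEs along segments from [p0]), so
   [M(p) = 1 - s(p0) (p - p0)] satisfies [M s = s(p0)]; with [a_ijk = 0] this
   gives [∂_k G = γ_k G], and integrating along segments again makes [G]
   proportional to [G(p0)]. *)

Section ConformalAlgebra.
Variables (R : numFieldType) (n : nat).
Implicit Types (A : 'M[R]_n) (g s : 'I_n -> R).

Lemma sum_invmx_mul A i k : A \in unitmx ->
  \sum_j invmx A i j * A j k = (i == k)%:R.
Proof. by move=> uA; have /matrixP/(_ i k) := mulVmx uA; rewrite !mxE. Qed.

Lemma sum_mul_invmx A i k : A \in unitmx ->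
  \sum_j A i j * invmx A j k = (i == k)%:R.
Proof. by move=> uA; have /matrixP/(_ i k) := mulmxV uA; rewrite !mxE. Qed.

Lemma sum_mul_eq (x : 'I_n -> R) k : \sum_i x i * (i == k)%:R = x k.
Proof.
rewrite (bigD1 k) //= eqxx mulr1 big1 ?addr0 // => i /negbTE ->.
by rewrite mulr0.
Qed.

(* [D k i j] stands for the derivative [∂_k f_ij]. *)
Definition s_form A (D : 'I_n -> 'I_n -> 'I_n -> R) k :=
  ((n.+2)%:R * (1 - n%:R))^-1 *
  \sum_(i < n) \sum_(j < n) invmx A i j * (D k i j - n%:R * D j i k).

Definition c_form A (D : 'I_n -> 'I_n -> 'I_n -> R) k :=
  ((n.+2)%:R * (n%:R - 1))^-1 *
  \sum_(i < n) \sum_(j < n) invmx A i j * ((n.+3)%:R * D k i j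
                                           - 2 * (n.+1)%:R * D j i k).

Definition conformal_deriv A g s k i j := g k * A i j + s i * A k j + s j * A k i.

Section Contractions.
Variables (A : 'M[R]_n) (g s : 'I_n -> R).
Hypotheses (symA : A^T = A) (uA : A \in unitmx).
Let D := conformal_deriv A g s.

Let symmetric i j : A i j = A j i.
Proof. by rewrite -{1}symA mxE. Qed.

Let symmetric_inv i j : invmx A i j = invmx A j i.
Proof. by rewrite -[in LHS]symA -trmx_inv mxE. Qed.

Let trace_invmx_mul : \sum_i \sum_j invmx A i j * A i j = n%:R.
Proof.
rewrite -[n in RHS]card_ord -sumr_const; apply: eq_bigr => i _.
rewrite (_ : 1 = (i == i)%:R); last by rewrite eqxx.
rewrite -(sum_invmx_mul i i uA).
by apply: eq_bigr => j _; rewrite symmetric.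
Qed.

Lemma contract_conformal_deriv k :
  \sum_i \sum_j invmx A i j * D k i j = n%:R * g k + 2 * s k.
Proof.
rewrite /D /conformal_deriv.
under eq_bigr => i _ do rewrite (eq_bigr _ (fun j _ => mulrDr _ _ _)) big_split.
under eq_bigr => i _ do rewrite (eq_bigr _ (fun j _ => mulrDr _ _ _)) big_split.
rewrite !big_split /=.
have -> : \sum_i \sum_j invmx A i j * (g k * A i j) = g k * n%:R.
  rewrite -trace_invmx_mul mulr_sumr; apply: eq_bigr => i _; rewrite mulr_sumr.
  by apply: eq_bigr => j _; rewrite mulrCA.
have -> : \sum_i \sum_j invmx A i j * (s i * A k j) = s k.
  rewrite -(sum_mul_eq s k); apply: eq_bigr => i _.
  rewrite -(sum_invmx_mul i k uA) mulr_sumr.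
  by apply: eq_bigr => j _; rewrite mulrCA symmetric.
have -> : \sum_i \sum_j invmx A i j * (s j * A k i) = s k.
  rewrite exchange_big /= -(sum_mul_eq s k); apply: eq_bigr => j _.
  rewrite eq_sym -(sum_mul_invmx k j uA) mulr_sumr.
  by apply: eq_bigr => i _; ring.
ring.
Qed.

Lemma contract_conformal_deriv_mixed k :
  \sum_i \sum_j invmx A i j * D j i k = g k + (n%:R + 1) * s k.
Proof.
rewrite /D /conformal_deriv.
under eq_bigr => i _ do rewrite (eq_bigr _ (fun j _ => mulrDr _ _ _)) big_split.
under eq_bigr => i _ do rewrite (eq_bigr _ (fun j _ => mulrDr _ _ _)) big_split.
rewrite !big_split /=.
have -> : \sum_i \sum_j invmx A i j * (g j * A i k) = g k.
  rewrite exchange_big /= -(sum_mul_eq g k); apply: eq_bigr => j _.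
  rewrite -(sum_invmx_mul j k uA) mulr_sumr.
  by apply: eq_bigr => i _; rewrite mulrCA symmetric_inv.
have -> : \sum_i \sum_j invmx A i j * (s i * A j k) = s k.
  rewrite -(sum_mul_eq s k); apply: eq_bigr => i _.
  rewrite -(sum_invmx_mul i k uA) mulr_sumr.
  by apply: eq_bigr => j _; rewrite mulrCA.
have -> : \sum_i \sum_j invmx A i j * (s k * A j i) = s k * n%:R.
  rewrite -trace_invmx_mul mulr_sumr; apply: eq_bigr => i _; rewrite mulr_sumr.
  by apply: eq_bigr => j _; rewrite mulrCA symmetric.
ring.
Qed.

Let contract_comb (x y : R) k :
  \sum_i \sum_j invmx A i j * (x * D k i j + y * D j i k)
  = x * (n%:R * g k + 2 * s k) + y * (g k + (n%:R + 1) * s k).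
Proof.
rewrite -contract_conformal_deriv -contract_conformal_deriv_mixed !mulr_sumr -big_split.
apply: eq_bigr => i _; rewrite !mulr_sumr -big_split.
by apply: eq_bigr => j _ /=; ring.
Qed.

Hypothesis n_gt1 : (1 < n)%N.

Let natn_neq1 : (n%:R : R) != 1.
Proof. by rewrite pnatr_eq1 gtn_eqF. Qed.

Let natn2_neq0 : (n%:R + 2 : R) != 0.
Proof. by rewrite -natrD pnatr_eq0 addn2. Qed.

Lemma s_form_conformal_deriv k : s_form A D k = s k.
Proof.
rewrite /s_form (eq_bigr (fun i => \sum_j invmx A i j *
    (1 * D k i j + (- n%:R) * D j i k)));
  last by move=> i _; apply: eq_bigr => j _; congr (_ * _); ring.
rewrite contract_comb -addn2 natrD; field.
by rewrite natn2_neq0 subr_eq0 eq_sym natn_neq1.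
Qed.

Lemma c_form_conformal_deriv k : c_form A D k = g k - 2 * s k.
Proof.
rewrite /c_form (eq_bigr (fun i => \sum_j invmx A i j *
    ((n.+3)%:R * D k i j + (- (2 * (n.+1)%:R)) * D j i k)));
  last by move=> i _; apply: eq_bigr => j _; congr (_ * _); ring.
have -> : (n.+3)%:R = n%:R + 3 :> R by rewrite -addn3 natrD.
have -> : (n.+1)%:R = n%:R + 1 :> R by rewrite -addn1 natrD.
rewrite contract_comb -addn2 natrD; field.
by rewrite natn2_neq0 subr_eq0 natn_neq1.
Qed.

End Contractions.
End ConformalAlgebra.

Section CongruenceAlgebra.
Variables (R : fieldType) (n : nat).
Implicit Types (A M D : 'M[R]_n) (s b : 'cV[R]_n) (e d : 'rV[R]_n).

Lemma mx_neq0_entry m1 m2 (A : 'M[R]_(m1, m2)) : A != 0 -> exists i j, A i j != 0.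
Proof.
rewrite matrix_eq0 negb_forall => /existsP[i]; rewrite negb_forall => /existsP[j] Aij.
by exists i, j.
Qed.

Lemma unitmx_neq0 A : (0 < n)%N -> A \in unitmx -> A != 0.
Proof.
case: n A => // m A _; apply: contraTneq => ->.
by rewrite unitmxE det0 unitr0.
Qed.

Lemma congr_mx_inj M D1 D2 : M \in unitmx -> M *m D1 *m M^T = M *m D2 *m M^T -> D1 = D2.
Proof.
move=> uM /(congr1 (fun X => invmx M *m X *m invmx M^T)).
by rewrite !mulmxA mulVmx // !mul1mx !mulmxK // unitmx_tr.
Qed.

(* The matrix [(g f_ij + s_i f_kj + s_j f_ik)_ij] when [e] is the [k]-th basis
   row. *)
Definition conformal_mx A (g : R) s e := g *: A + s *m (e *m A) + A *m (e^T *m s^T).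

Lemma conformal_mx_delta A g s k i j :
  conformal_mx A g s (delta_mx 0 k) i j = g * A i j + s i 0 * A k j + A i k * s j 0.
Proof.
rewrite /conformal_mx [A *m _]mulmxA trmx_delta -rowE -colE.
by rewrite !mxE !big_ord1 !mxE.
Qed.

(* The derivative of a congruence [M A M^T] along [e], when [M] moves by
   [b e] with [M s = - b], is proportional to [M A M^T] exactly when the
   derivative [D] of [A] is conformal. *)
Lemma congruence_conformal M A D s b e g : M \in unitmx -> M *m s = - b ->
  (b *m e *m A + M *m D) *m M^T + M *m A *m (b *m e)^T = g *: (M *m A *m M^T)
  <-> D = conformal_mx A g s e.
Proof.
move=> uM Ms; have {Ms}-> : b = - (M *m s) by rewrite Ms opprK.
have -> : (- (M *m s) *m e *m A + M *m D) *m M^T + M *m A *m (- (M *m s) *m e)^T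
    = M *m (D - s *m (e *m A) - A *m (e^T *m s^T)) *m M^T.
  rewrite !mulmxBr !mulmxBl !mulNmx (linearN (@trmx _ _ _)) /=.
  rewrite !trmx_mul !mulmxN !mulmxDl !mulNmx !mulmxA.
  by rewrite (addrC (- _)).
rewrite scalemxAl scalemxAr; split => [/(congr_mx_inj uM) DA | ->].
  by rewrite /conformal_mx -DA addrAC !subrK.
by rewrite /conformal_mx addrAC !addrK.
Qed.

Lemma unitmx_rank1_update b d : 1 + (d *m b) 0 0 != 0 -> (1%:M + b *m d) \in unitmx.
Proof.
set k := (d *m b) 0 0 => k0.
have bdbd : b *m d *m (b *m d) = k *: (b *m d).
  by rewrite mulmxA -(mulmxA b d b) [d *m b]mx11_scalar mul_mx_scalar scalemxAl.
suff inv : (1%:M + b *m d) *m (1%:M - (1 + k)^-1 *: (b *m d)) = 1%:M.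
  by case: (mulmx1_unit inv).
rewrite mulmxBr mulmx1 -scalemxAr mulmxDl mul1mx bdbd.
rewrite -{2}[b *m d]scale1r -scalerDl scalerA mulVf // scale1r.
by rewrite addrK.
Qed.

(* [(M + b d)^-1 b] only rescales [M^-1 b]; this is what makes the [s_k] of a
   linearizable equation satisfy the flatness condition. *)
Lemma invmx_rank1_update_mul M b d : M \in unitmx -> (M + b *m d) \in unitmx ->
  let beta := invmx M *m b in
  invmx (M + b *m d) *m b = (1 + (d *m beta) 0 0)^-1 *: beta.
Proof.
move=> uM uMbd beta.
have Mbeta : (M + b *m d) *m beta = (1 + (d *m beta) 0 0) *: b.
  have bdbeta : b *m (d *m beta) = (d *m beta) 0 0 *: b.
    by rewrite {1}[d *m beta]mx11_scalar mul_mx_scalar.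
  by rewrite mulmxDl mulKVmx // -mulmxA bdbeta scalerDl scale1r.
have den0 : 1 + (d *m beta) 0 0 != 0.
  apply/eqP => den0; move: Mbeta; rewrite den0 scale0r => Mbeta0.
  have beta0 : beta = 0 by rewrite -(mulKmx uMbd beta) Mbeta0 mulmx0.
  by move: den0; rewrite beta0 mulmx0 mxE addr0 => /eqP; rewrite oner_eq0.
have Mbeta' : (M + b *m d) *m ((1 + (d *m beta) 0 0)^-1 *: beta) = b.
  by rewrite -scalemxAr Mbeta scalerA mulVf // scale1r.
by rewrite -(mulKmx uMbd (_ *: beta)) Mbeta'.
Qed.

Lemma det_block_affine_shear b (p : 'rV[R]_n) :
  \det (block_mx (1%:M - b *m p) b (- p) 1%:M : 'M[R]_(n + 1)) = 1.
Proof.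
have -> : block_mx (1%:M - b *m p) b (- p) 1%:M
    = block_mx 1%:M b 0 1%:M *m block_mx 1%:M 0 (- p) 1%:M :> 'M[R]_(n + 1).
  by rewrite mulmx_block !mul1mx !mulmx1 !mul0mx !add0r mulmxN.
by rewrite det_mulmx det_ublock det_lblock !det1 !mulr1.
Qed.

End CongruenceAlgebra.

Section BigDifferentiable.
Variables (R : numFieldType) (V : normedModType R).
Implicit Types (p : V).

Lemma differentiable_big_sum (I : Type) (r : seq I) (P : pred I)
    (f : I -> V -> R) p :
  (forall i, P i -> differentiable (f i) p) ->
  differentiable (fun q => \sum_(i <- r | P i) f i q) p.
Proof.
move=> df; elim: r => [|a r IHr].
  by under eq_fun do rewrite big_nil; exact: differentiable_cst.
under eq_fun do rewrite big_cons.
by case Pa: (P a) => //; exact: differentiableD (df a Pa) IHr.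
Qed.

Lemma differentiable_big_prod (I : Type) (r : seq I) (P : pred I)
    (f : I -> V -> R) p :
  (forall i, P i -> differentiable (f i) p) ->
  differentiable (fun q => \prod_(i <- r | P i) f i q) p.
Proof.
move=> df; elim: r => [|a r IHr].
  by under eq_fun do rewrite big_nil; exact: differentiable_cst.
under eq_fun do rewrite big_cons.
by case Pa: (P a) => //; exact: differentiableM (df a Pa) IHr.
Qed.

Lemma differentiable_det m (G : V -> 'M[R]_m) p :
  (forall i j, differentiable (fun q => G q i j) p) ->
  differentiable (fun q => \det (G q)) p.
Proof.
move=> dG; apply: differentiable_big_sum => s _.
apply: differentiableM; first exact: differentiable_cst.
by apply: differentiable_big_prod.
Qed.

Lemma differentiable_adj m (G : V -> 'M[R]_m) p i j :
  (forall i j, differentiable (fun q => G q i j) p) ->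
  differentiable (fun q => \adj (G q) i j) p.
Proof.
move=> dG; under eq_fun do rewrite mxE /cofactor.
apply: differentiableM; first exact: differentiable_cst.
by apply: differentiable_det => a b; under eq_fun do rewrite !mxE.
Qed.

(* [invmx] with its test for invertibility dropped; it agrees with [invmx] on
   invertible matrices and, unlike [invmx], is smooth where [\det] is nonzero. *)
Definition adj_inv m (A : 'M[R]_m) := (\det A)^-1 *: \adj A.

Lemma invmx_adj_inv m (A : 'M[R]_m) : A \in unitmx -> invmx A = adj_inv A.
Proof. by rewrite /invmx => ->. Qed.

Lemma differentiable_adj_inv m (G : V -> 'M[R]_m) p i j :
  (forall i j, differentiable (fun q => G q i j) p) -> \det (G p) != 0 ->
  differentiable (fun q => adj_inv (G q) i j) p.
Proof.
move=> dG detG0; under eq_fun do rewrite mxE.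
apply: differentiableM; last exact: differentiable_adj.
exact: differentiableV (differentiable_det dG) detG0.
Qed.

End BigDifferentiable.

Section PartialDerivatives.
Variables (R : realType) (n : nat).
Local Notation V := 'rV[R]_n.
Implicit Types (f g : V -> R) (p q : V).

Lemma pd_diff k f p : differentiable f p -> pd k f p = 'd f p (ebasis R k).
Proof. by move=> df; rewrite /pd deriveE. Qed.

Lemma pd_add k f g p : differentiable f p -> differentiable g p ->
  pd k (fun q => f q + g q) p = pd k f p + pd k g p.
Proof.
move=> df dg; rewrite /pd (_ : (fun q => f q + g q) = f + g) //.
by rewrite deriveD //; exact: diff_derivable.
Qed.

Lemma pd_mul k f g p : differentiable f p -> differentiable g p ->
  pd k (fun q => f q * g q) p = pd k f p * g p + f p * pd k g p.
Proof.
move=> df dg; rewrite /pd (_ : (fun q => f q * g q) = f * g) //.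
rewrite deriveM; try exact: diff_derivable.
by rewrite /GRing.scale /= addrC mulrC.
Qed.

Lemma pd_cst k (c : R) p : pd k (fun _ => c) p = 0.
Proof. exact: derive_cst. Qed.

Lemma pd_addr k f (c : R) p : differentiable f p ->
  pd k (fun q => f q + c) p = pd k f p.
Proof. by move=> df; rewrite pd_add ?pd_cst ?addr0 //; exact: differentiable_cst. Qed.

Lemma pd_mulr k f (c : R) p : differentiable f p ->
  pd k (fun q => f q * c) p = pd k f p * c.
Proof.
by move=> df; rewrite pd_mul ?pd_cst ?mulr0 ?addr0 //; exact: differentiable_cst.
Qed.

Lemma pd_mull k f (c : R) p : differentiable f p ->
  pd k (fun q => c * f q) p = c * pd k f p.
Proof.
by move=> df; rewrite pd_mul ?pd_cst ?mul0r ?add0r //; exact: differentiable_cst.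
Qed.

Lemma pd_inv k f p : differentiable f p -> f p != 0 ->
  pd k (fun q => (f q)^-1) p = - (f p) ^- 2 * pd k f p.
Proof. by move=> df f0; rewrite /pd deriveV //; exact: diff_derivable. Qed.

Lemma pd_coord k j p : pd k (fun q : V => q 0 j) p = (j == k)%:R.
Proof.
have := @derive_mx R V 1 n id p (ebasis R k) (@derivable_id _ _ _ _).
by rewrite derive_id => /matrixP /(_ 0 j); rewrite !mxE /= => h; rewrite /pd -h.
Qed.

Lemma pd_big_sum k (I : Type) (r : seq I) (P : pred I) (f : I -> V -> R) p :
  (forall i, P i -> differentiable (f i) p) ->
  pd k (fun q => \sum_(i <- r | P i) f i q) p = \sum_(i <- r | P i) pd k (f i) p.
Proof.
move=> df; elim: r => [|a r IHr].
  by under eq_fun do rewrite big_nil; rewrite big_nil pd_cst.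
under eq_fun do rewrite big_cons.
rewrite big_cons; case Pa: (P a) => //.
by rewrite pd_add ?IHr //; [exact: df | exact: differentiable_big_sum].
Qed.

Lemma diff_pd f p (v : V) : differentiable f p ->
  'd f p v = \sum_j v 0 j * pd j f p.
Proof.
move=> df; rewrite {1}(row_sum_delta v) linear_sum; apply: eq_bigr => j _.
by rewrite linearZ pd_diff.
Qed.

(* [1 + (q - p0) beta], the common denominator of the entries of
   [(M p0 + b (q - p0))^-1 b]. *)
Definition affine_form (p0 : V) (beta : 'cV[R]_n) q := 1 + ((q - p0) *m beta) 0 0.

Lemma affine_formE p0 beta :
  affine_form p0 beta = fun q => 1 + \sum_l (q 0 l - p0 0 l) * beta l 0.
Proof.
apply/funext => q; rewrite /affine_form !mxE; congr (_ + _).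
by apply: eq_bigr => l _; rewrite !mxE.
Qed.

Section AffineForm.
Variables (p0 : V) (beta : 'cV[R]_n) (q : V).

Let dcoord l : differentiable (fun x : V => x 0 l) q.
Proof. exact: differentiable_coord. Qed.

Let dshift l : differentiable (fun x : V => x 0 l - p0 0 l) q.
Proof. by apply: differentiableB => //; exact: differentiable_cst. Qed.

Let dterm l : differentiable (fun x : V => (x 0 l - p0 0 l) * beta l 0) q.
Proof. by apply: differentiableM => //; exact: differentiable_cst. Qed.

Lemma differentiable_affine_form : differentiable (affine_form p0 beta) q.
Proof.
rewrite affine_formE; apply: differentiableD; first exact: differentiable_cst.
exact: differentiable_big_sum.
Qed.

Lemma pd_affine_form j : pd j (affine_form p0 beta) q = beta j 0.
Proof.
rewrite affine_formE pd_add; first last.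
- exact: differentiable_big_sum.
- exact: differentiable_cst.
rewrite pd_cst add0r pd_big_sum // -(sum_mul_eq (fun l => beta l 0) j).
by apply: eq_bigr => l _; rewrite pd_mulr // pd_addr // pd_coord mulrC.
Qed.

End AffineForm.

Definition mx_differentiable m1 m2 (G : V -> 'M[R]_(m1, m2)) p :=
  forall i j, differentiable (fun q => G q i j) p.

Definition pdmx k m1 m2 (G : V -> 'M[R]_(m1, m2)) p :=
  \matrix_(i, j) pd k (fun q => G q i j) p.

Lemma mx_differentiable_mul m1 m2 m3
    (G1 : V -> 'M[R]_(m1, m2)) (G2 : V -> 'M[R]_(m2, m3)) p :
  mx_differentiable G1 p -> mx_differentiable G2 p ->
  mx_differentiable (fun q => G1 q *m G2 q) p.
Proof.
move=> dG1 dG2 i j; under eq_fun do rewrite mxE.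
by apply: differentiable_big_sum => l _; apply: differentiableM.
Qed.

Lemma pdmx_mul k m1 m2 m3 (G1 : V -> 'M[R]_(m1, m2)) (G2 : V -> 'M[R]_(m2, m3)) p :
  mx_differentiable G1 p -> mx_differentiable G2 p ->
  pdmx k (fun q => G1 q *m G2 q) p = pdmx k G1 p *m G2 p + G1 p *m pdmx k G2 p.
Proof.
move=> dG1 dG2; apply/matrixP => i j; rewrite !mxE.
under eq_fun do rewrite mxE.
rewrite pd_big_sum; last by move=> l _; apply: differentiableM.
by rewrite -big_split; apply: eq_bigr => l _; rewrite pd_mul // !mxE.
Qed.

Lemma mx_differentiable_tr m1 m2 (G : V -> 'M[R]_(m1, m2)) p :
  mx_differentiable G p -> mx_differentiable (fun q => (G q)^T) p.
Proof. by move=> dG i j; under eq_fun do rewrite mxE. Qed.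

Lemma pdmx_tr k m1 m2 (G : V -> 'M[R]_(m1, m2)) p :
  pdmx k (fun q => (G q)^T) p = (pdmx k G p)^T.
Proof. by apply/matrixP => i j; rewrite !mxE; under eq_fun do rewrite mxE. Qed.

Lemma mx_differentiable_affine (C : 'M[R]_n) (b : 'cV[R]_n) p :
  mx_differentiable (fun q => C + b *m q) p.
Proof.
move=> i j; under eq_fun do rewrite !mxE big_ord1.
apply: differentiableD; first exact: differentiable_cst.
by apply: differentiableM; [exact: differentiable_cst | exact: differentiable_coord].
Qed.

Lemma pdmx_affine k (C : 'M[R]_n) (b : 'cV[R]_n) p :
  pdmx k (fun q => C + b *m q) p = b *m ebasis R k.
Proof.
apply/matrixP => i j; rewrite !mxE big_ord1.
under eq_fun do rewrite !mxE big_ord1.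
have dcoord : differentiable (fun q : V => q 0 j) p by exact: differentiable_coord.
rewrite pd_add; [|exact: differentiable_cst|exact: differentiableM].
by rewrite pd_cst add0r pd_mull // pd_coord /ebasis mxE eqxx.
Qed.

Lemma pdmx_congruence_affine k (C : 'M[R]_n) (b : 'cV[R]_n) (F : V -> 'M[R]_n) p :
  mx_differentiable F p ->
  pdmx k (fun q => (C + b *m q) *m F q *m (C + b *m q)^T) p
  = (b *m ebasis R k *m F p + (C + b *m p) *m pdmx k F p) *m (C + b *m p)^T
    + (C + b *m p) *m F p *m (b *m ebasis R k)^T.
Proof.
move=> dF; have dM := mx_differentiable_affine C b.
rewrite pdmx_mul; first last.
- exact: mx_differentiable_tr.
- exact: mx_differentiable_mul.
by rewrite pdmx_mul // pdmx_tr !pdmx_affine.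
Qed.

Lemma pdmx_proportional (G : V -> 'M[R]_n) (K : 'M[R]_n) (lam : V -> R) p :
  mx_differentiable G p -> G p != 0 -> (\forall q \near p, G q = lam q *: K) ->
  exists gam : 'I_n -> R, forall k, pdmx k G p = gam k *: G p.
Proof.
move=> dG Gp0 GK.
have [a [b Gab0]] := mx_neq0_entry Gp0.
have Kab0 : K a b != 0.
  move: Gab0; have /nbhs_singleton -> := GK; rewrite mxE.
  by apply: contraNneq => ->; rewrite mulr0.
pose phi q := G q a b / K a b.
have Gphi : \forall q \near p, G q = phi q *: K.
  by apply: filterS GK => q Gq; rewrite /phi Gq mxE mulfK.
have phi0 : phi p != 0 by rewrite mulf_neq0 ?invr_eq0.
exists (fun k => pd k phi p / phi p) => k.
apply/matrixP => i j; rewrite !mxE.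
have -> : pd k (fun q => G q i j) p = pd k (fun q => phi q * K i j) p.
  by apply: near_eq_derive; apply: filterS Gphi => q ->; rewrite mxE.
rewrite pd_mulr; last by apply: differentiableM => //; exact: differentiable_cst.
have /nbhs_singleton -> := Gphi; rewrite mxE.
by field.
Qed.

End PartialDerivatives.

Section LinearODE.
Variable R : realType.

Lemma derive_scaler (c x : R) :
  derivable (fun y : R => c * y) x 1 /\ 'D_1 (fun y : R => c * y) x = c.
Proof.
have -> : (fun y : R => c * y) = cst c * id by [].
split; first by apply: derivableM; [exact: derivable_cst | exact: derivable_id].
rewrite deriveM ?derive_cst ?derive_id /GRing.scale /=;
  [ring | exact: derivable_cst | exact: derivable_id].
Qed.

Lemma derive_expR_scaler (c x : R) :
  derivable (fun y : R => expR (c * y)) x 1 /\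
  'D_1 (fun y : R => expR (c * y)) x = c * expR (c * x).
Proof.
have [dcx Dcx] := derive_scaler c x.
have -> : (fun y : R => expR (c * y)) = expR \o (fun y : R => c * y) by [].
split.
  apply/derivable1_diffP; apply: differentiable_comp; first exact/derivable1_diffP.
  exact/derivable1_diffP/derivable_expR.
rewrite -derive1E derive1_comp //.
have DexpR : 'D_1 expR (c * x) = expR (c * x) :> R by rewrite derive_val.
by rewrite !derive1E Dcx DexpR mulrC.
Qed.

(* Gronwall: [g^2 exp(-2 A t)] is nonincreasing when [A] bounds [a] on [0, 1]. *)
Lemma linear_ode_zero (g a : R -> R) : g 0 = 0 ->
  (forall t, 0 <= t <= 1 -> derivable g t 1 /\ 'D_1 g t = a t * g t) ->
  {within `[0, 1], continuous a} ->
  forall t, 0 <= t <= 1 -> g t = 0.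
Proof.
move=> g0 hg ca.
have [c c01 amax] := EVT_max ler01 ca.
set A := a c in amax.
pose h x := g x ^+ 2 * expR (- (2 * A) * x).
move=> t /andP[t0 t1].
have [->|tneq0] := eqVneq t 0; first exact: g0.
have tgt0 : 0 < t by rewrite lt_neqAle eq_sym tneq0.
have hder x : 0 <= x <= 1 -> derivable h x 1 /\
    'D_1 h x = 2 * g x ^+ 2 * expR (- (2 * A) * x) * (a x - A).
  move=> x01; have [dg Dg] := hg x x01.
  have [de De] := derive_expR_scaler (- (2 * A)) x.
  have dg2 : derivable (g ^+ 2) x 1 by exact: derivableX.
  have -> : h = (g ^+ 2) * (fun y => expR (- (2 * A) * y)) by [].
  split; first exact: derivableM dg2 de.
  rewrite (deriveM dg2 de) (deriveX _ dg) De Dg /GRing.scale /= exprfctE /=.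
  by ring.
have in01 x : x \in `[0, t] -> 0 <= x <= 1.
  by rewrite in_itv /= => /andP[-> xt]; exact: le_trans xt t1.
have oin01 x : x \in `]0, t[ -> 0 <= x <= 1.
  by rewrite in_itv /= => /andP[x0 xt]; apply: in01; rewrite in_itv /= !ltW.
have hcont : {within `[0, t], continuous h}.
  by apply: derivable_within_continuous => x /in01 /hder [].
have hd x : x \in `]0, t[ -> is_derive x 1 h ('D_1 h x).
  by move=> /oin01 /hder [dh _]; exact: derivableP.
have [d dI hMVT] := MVT tgt0 hd hcont.
have d01 := oin01 d dI.
have h0 : h 0 = 0 by rewrite /h g0 expr0n /= mul0r.
rewrite h0 subr0 (hder d d01).2 in hMVT.
have ad : a d - A <= 0.
  by rewrite subr_le0; apply: amax; move: d01; rewrite in_itv.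
have ht_le0 : h t <= 0.
  rewrite hMVT subr0; apply: mulr_le0_ge0; last exact: ltW.
  apply: mulr_ge0_le0 => //; apply: mulr_ge0; last exact: expR_ge0.
  by apply: mulr_ge0 => //; exact: sqr_ge0.
have ht_ge0 : 0 <= h t by apply: mulr_ge0; [exact: sqr_ge0 | exact: expR_ge0].
have /eqP : h t = 0 by apply/eqP; rewrite eq_le ht_le0 ht_ge0.
by rewrite mulf_eq0 expR_eq0 orbF sqrf_eq0 => /eqP.
Qed.

End LinearODE.

Section Segments.
Variables (R : realType) (n : nat).
Local Notation V := 'rV[R]_n.

Lemma ball_segment (p0 p : V) (r : R) t : ball p0 r p -> 0 <= t <= 1 ->
  ball p0 r (p0 + t *: (p - p0)).
Proof.
rewrite -!ball_normE /ball_ /= => hp /andP[t0 t1].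
rewrite opprD addrA subrr add0r normrN normrZ (ger0_norm t0).
apply: le_lt_trans hp; rewrite distrC.
have := normr_ge0 (p0 - p); nra.
Qed.

Lemma derive_along_line (f : V -> R) (p0 v : V) (t : R) :
  differentiable f (p0 + t *: v) ->
  derivable (fun s : R => f (p0 + s *: v)) t 1 /\
  'D_1 (fun s : R => f (p0 + s *: v)) t = \sum_j v 0 j * pd j f (p0 + t *: v).
Proof.
move=> df.
pose l : R -> V := cst p0 + ( *:%R ^~ v : R -> V).
have dl : is_diff t l (0 + ( *:%R ^~ v)) by exact: is_diffD.
have dfl : differentiable (f \o l) t by apply: differentiable_comp.
have -> : (fun s : R => f (p0 + s *: v)) = f \o l by [].
split; first exact: diff_derivable.
rewrite deriveE // diff_comp // diff_val /= add0r scale1r.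
exact: diff_pd.
Qed.

Lemma segment_ode_zero (g a : V -> R) (p0 q : V) :
  g p0 = 0 ->
  (forall t, 0 <= t <= 1 -> let z := p0 + t *: (q - p0) in
    [/\ differentiable g z, differentiable a z &
        \sum_j (q - p0) 0 j * pd j g z = a z * g z]) ->
  forall t, 0 <= t <= 1 -> g (p0 + t *: (q - p0)) = 0.
Proof.
move=> g0 hseg.
apply: (@linear_ode_zero R _ (fun t => a (p0 + t *: (q - p0)))).
- by rewrite scale0r addr0.
- move=> t t01; have [dg _ Dg] := hseg t t01.
  by have [? ->] := derive_along_line dg; rewrite Dg.
- apply: continuous_in_subspaceT => t; rewrite inE /= in_itv /= => t01.
  have [_ da _] := hseg t t01; have [dat _] := derive_along_line da.
  exact/differentiable_continuous/derivable1_diffP.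
Qed.

Lemma segment_ode_zero_end (g a : V -> R) (p0 q : V) :
  g p0 = 0 ->
  (forall t, 0 <= t <= 1 -> let z := p0 + t *: (q - p0) in
    [/\ differentiable g z, differentiable a z &
        \sum_j (q - p0) 0 j * pd j g z = a z * g z]) ->
  g q = 0.
Proof.
move=> g0 hseg; have := segment_ode_zero g0 hseg (t := 1).
by rewrite scale1r addrCA subrr addr0; apply; rewrite ler01 lexx.
Qed.

Variables (p0 : V) (r : R).

(* Contracting the system with [q - p0] yields a scalar linear ODE along the
   segment [[p0, q]] for [sum_j (q - p0)_j u_j], which therefore vanishes; then
   each [u_i] has zero derivative along the segment. *)
Lemma pd_linear_system_zero (u sig : 'I_n -> V -> R) :
  (forall i q, ball p0 r q -> differentiable (u i) q) ->
  (forall i q, ball p0 r q -> differentiable (sig i) q) ->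
  (forall i j q, ball p0 r q -> pd j (u i) q = sig i q * u j q) ->
  (forall i, u i p0 = 0) ->
  forall i q, ball p0 r q -> u i q = 0.
Proof.
move=> du dsig hu u0 i q bq.
pose d := q - p0.
have seg t : 0 <= t <= 1 -> ball p0 r (p0 + t *: d) by exact: ball_segment.
have dsum (w : 'I_n -> V -> R) z : (forall l, differentiable (w l) z) ->
    differentiable (fun x => \sum_l d 0 l * w l x) z.
  move=> dw; apply: differentiable_big_sum => l _.
  by apply: differentiableM; [exact: differentiable_cst | exact: dw].
pose contr x := \sum_l d 0 l * u l x.
have contr0 : forall t, 0 <= t <= 1 -> contr (p0 + t *: d) = 0.
  apply: (segment_ode_zero (a := fun x => \sum_l d 0 l * sig l x)).
    by rewrite /contr /= big1 // => l _; rewrite u0 mulr0.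
  move=> s s01 z; have bsz : ball p0 r z by exact: seg.
  split; [by apply: dsum => l; exact: du | by apply: dsum => l; exact: dsig |].
  have pd_contr j : pd j contr z = (\sum_l d 0 l * sig l z) * u j z.
    rewrite /contr pd_big_sum; last by move=> l _; apply: differentiableM;
      [exact: differentiable_cst | exact: du].
    rewrite mulr_suml; apply: eq_bigr => l _.
    by rewrite pd_mull ?hu ?mulrA //; exact: du.
  under eq_bigr => j _ do rewrite pd_contr.
  by rewrite /contr mulr_sumr; apply: eq_bigr => j _; rewrite mulrCA.
apply: (segment_ode_zero_end (p0 := p0) (a := fun _ => 0)); first exact: u0.
move=> t t01 z; split; [exact/du/seg | exact: differentiable_cst |].
rewrite mul0r; transitivity (sig i z * contr z); last by rewrite contr0 ?mulr0.
rewrite /contr mulr_sumr.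
by apply: eq_bigr => j _; rewrite hu; [ring | exact: seg].
Qed.

Lemma proportional_of_pdmx (G : V -> 'M[R]_n) (gam : 'I_n -> V -> R) (a b : 'I_n) :
  (forall q, ball p0 r q -> mx_differentiable G q) ->
  (forall k q, ball p0 r q -> differentiable (gam k) q) ->
  (forall k q, ball p0 r q -> pdmx k G q = gam k q *: G q) ->
  G p0 a b != 0 ->
  forall q, ball p0 r q -> G q = (G q a b / G p0 a b) *: G p0.
Proof.
move=> dG dgam hG Gab0 q bq; apply/matrixP => x y; rewrite mxE.
apply: (mulIf Gab0); rewrite [RHS]mulrAC mulfVK //.
apply/eqP; rewrite -subr_eq0 -mulrN; apply/eqP.
pose g z := G z x y * G p0 a b + G z a b * - G p0 x y; change (g q = 0).
apply: (segment_ode_zero_end (p0 := p0) (a := fun z => \sum_j (q - p0) 0 j * gam j z)).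
  by rewrite /g mulrN mulrC subrr.
move=> t t01 z; have bz : ball p0 r z by exact: ball_segment.
have pdG j c e : pd j (fun w => G w c e) z = gam j z * G z c e.
  by have /matrixP/(_ c e) := hG j z bz; rewrite !mxE.
have dGc c e (k : R) : differentiable (fun w => G w c e * k) z.
  by apply: differentiableM; [exact: dG | exact: differentiable_cst].
split; first exact: differentiableD.
  apply: differentiable_big_sum => j _.
  by apply: differentiableM; [exact: differentiable_cst | exact: dgam].
rewrite mulr_suml; apply: eq_bigr => j _.
by rewrite /g pd_add // !pd_mulr ?pdG; [ring | exact: dG | exact: dG].
Qed.

End Segments.

Section LinearizationCriterion.
Variables (R : realType) (n : nat) (F : 'rV[R]_n -> 'M[R]_n) (U : set 'rV[R]_n).
Hypotheses (n_ge2 : (2 <= n)%N)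
  (smoothF : forall i j : 'I_n, smooth_on U (fent F i j))
  (symF : forall p, U p -> (F p)^T = F p)
  (unitF : forall p, U p -> F p \in unitmx).
Local Notation V := 'rV[R]_n.

Let diffF p : U p -> mx_differentiable F p.
Proof. by move=> Up i j; exact: (smoothF i j [::] Up). Qed.

Let diff_pdF p k i j : U p -> differentiable (pd k (fent F i j)) p.
Proof. by move=> Up; exact: (smoothF i j [:: k] Up). Qed.

Let symF_entry p i j : U p -> F p i j = F p j i.
Proof. by move=> Up; rewrite -{1}(symF Up) mxE. Qed.

(* On [U], [s_k] and [c_k] agree with these smooth expressions, built on
   [adj_inv] instead of [invmx]. *)
Definition contraction_smooth (x y : R) k p :=
  \sum_(i < n) \sum_(j < n)
     adj_inv (F p) i j * (x * pd k (fent F i j) p - y * pd j (fent F i k) p).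

Definition s_smooth k p :=
  ((n.+2)%:R * (1 - n%:R))^-1 * contraction_smooth 1 n%:R k p.

Definition c_smooth k p :=
  ((n.+2)%:R * (n%:R - 1))^-1 * contraction_smooth (n.+3)%:R (2 * (n.+1)%:R) k p.

Lemma s_coef_smooth k p : U p -> s_coef F k p = s_smooth k p.
Proof.
move=> Up; rewrite /s_coef /s_smooth /contraction_smooth invmx_adj_inv ?unitF //.
by under [in RHS]eq_bigr do under eq_bigr do rewrite mul1r.
Qed.

Lemma c_coef_smooth k p : U p -> c_coef F k p = c_smooth k p.
Proof. by move=> Up; rewrite /c_coef /c_smooth invmx_adj_inv ?unitF. Qed.

Lemma differentiable_contraction_smooth x y k p : U p ->
  differentiable (contraction_smooth x y k) p.
Proof.
move=> Up; apply: differentiable_big_sum => i _; apply: differentiable_big_sum => j _.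
apply: differentiableM.
  by apply: differentiable_adj_inv; [exact: diffF | rewrite -unitfE -unitmxE unitF].
by apply: differentiableB; apply: differentiableM;
  [exact: differentiable_cst | exact: diff_pdF | exact: differentiable_cst | exact: diff_pdF].
Qed.

Lemma differentiable_s_smooth k p : U p -> differentiable (s_smooth k) p.
Proof.
move=> Up; apply: differentiableM; first exact: differentiable_cst.
exact: differentiable_contraction_smooth.
Qed.

Lemma differentiable_c_smooth k p : U p -> differentiable (c_smooth k) p.
Proof.
move=> Up; apply: differentiableM; first exact: differentiable_cst.
exact: differentiable_contraction_smooth.
Qed.

Lemma conformal_of_a_coef p : U p -> (forall i j k, a_coef F i j k p = 0) ->
  forall k, pdmx k F p = conformal_mx (F p) (c_coef F k p + 2 * s_coef F k p)
                                      (\col_i s_coef F i p) (ebasis R k).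
Proof.
move=> Up a0 k; apply/matrixP => i j.
rewrite conformal_mx_delta !mxE (symF_entry i k Up).
by apply/eqP; rewrite -subr_eq0 -(a0 i j k) /a_coef /fent; apply/eqP; ring.
Qed.

Section ConformalDerivative.
Variables (p : V) (g : 'I_n -> R) (s : 'cV[R]_n).
Hypotheses (Up : U p)
  (pdF_conformal : forall k, pdmx k F p = conformal_mx (F p) (g k) s (ebasis R k)).

Let pdF_conformal_deriv :
  (fun k i j => pd k (fent F i j) p) = conformal_deriv (F p) g (fun i => s i 0).
Proof.
apply/funext => k; apply/funext => i; apply/funext => j.
have /matrixP/(_ i j) := pdF_conformal k.
by rewrite conformal_mx_delta mxE (symF_entry i k Up) /conformal_deriv => ->; ring.
Qed.

Lemma s_coef_of_conformal k : s_coef F k p = s k 0.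
Proof.
have -> : s_coef F k p = s_form (F p) (fun k i j => pd k (fent F i j) p) k by [].
by rewrite pdF_conformal_deriv (s_form_conformal_deriv _ _ (symF Up) (unitF Up) n_ge2).
Qed.

Lemma c_coef_of_conformal k : c_coef F k p = g k - 2 * s k 0.
Proof.
have -> : c_coef F k p = c_form (F p) (fun k i j => pd k (fent F i j) p) k by [].
by rewrite pdF_conformal_deriv (c_form_conformal_deriv _ _ (symF Up) (unitF Up) n_ge2).
Qed.

Lemma a_coef_of_conformal i j k : a_coef F i j k p = 0.
Proof.
have pdF : pd k (fent F i j) p = conformal_deriv (F p) g (fun i => s i 0) k i j.
  by rewrite -pdF_conformal_deriv.
rewrite /a_coef pdF /conformal_deriv c_coef_of_conformal !s_coef_of_conformal.
by rewrite (symF_entry k i Up); ring.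
Qed.

End ConformalDerivative.

Section Linearized.
Variables (V0 : set V) (C : 'M[R]_n) (b : 'cV[R]_n) (K : 'M[R]_n) (lam : V -> R).
Hypotheses (openV0 : open V0) (V0U : V0 `<=` U)
  (linV0 : forall p, V0 p -> (C + b *m p) \in unitmx /\ Ftrans F C b p = lam p *: K).
Let M q := C + b *m q.

Let unitM p : V0 p -> M p \in unitmx.
Proof. by case/linV0. Qed.

Lemma linearized_conformal p : V0 p -> exists gam : 'I_n -> R,
  forall k, pdmx k F p = conformal_mx (F p) (gam k) (- (invmx (M p) *m b)) (ebasis R k).
Proof.
move=> V0p; have Up := V0U V0p.
pose G q := M q *m F q *m (M q)^T.
have [gam pdG] : exists gam : 'I_n -> R, forall k, pdmx k G p = gam k *: G p.
  apply: (@pdmx_proportional _ _ G K (fun q => lam q / \det (M q))).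
  - apply: mx_differentiable_mul; last exact/mx_differentiable_tr/mx_differentiable_affine.
    by apply: mx_differentiable_mul; [exact: mx_differentiable_affine | exact: diffF].
  - apply: unitmx_neq0; first exact: ltnW n_ge2.
    by rewrite !unitmx_mul unitmx_tr unitM // unitF.
  - apply: filterS (open_nbhs_nbhs (conj openV0 V0p)) => q V0q.
    have [uMq] := linV0 V0q; rewrite /Ftrans -/(M q) -/(G q) => GK.
    have detM0 : \det (M q) != 0 by rewrite -unitfE -unitmxE.
    by rewrite mulrC -scalerA -GK scalerA mulVf // scale1r.
exists gam => k; apply/(@congruence_conformal _ _ (M p) _ _ _ b _ _ (unitM V0p)).
  by rewrite mulmxN mulKVmx // unitM.
have := pdG k; rewrite pdmx_congruence_affine; last exact: diffF.
by move=> ->.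
Qed.

Lemma s_coef_linearized p k : V0 p -> s_coef F k p = - (invmx (M p) *m b) k 0.
Proof.
move=> V0p; have [gam pdF] := linearized_conformal V0p.
by rewrite (s_coef_of_conformal (V0U V0p) pdF) mxE.
Qed.

Lemma a_coef_linearized p i j k : V0 p -> a_coef F i j k p = 0.
Proof.
move=> V0p; have [gam pdF] := linearized_conformal V0p.
exact: a_coef_of_conformal (V0U V0p) pdF i j k.
Qed.

Lemma flat_linearized p0 i j : V0 p0 ->
  pd j (s_coef F i) p0 - s_coef F i p0 * s_coef F j p0 = 0.
Proof.
move=> V0p0; pose beta := invmx (M p0) *m b.
pose psi := affine_form p0 beta.
have psi_p0 : psi p0 = 1 by rewrite /psi /affine_form subrr mul0mx mxE addr0.
have s_near k : \forall q \near p0, s_coef F k q = - beta k 0 * (psi q)^-1.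
  apply: filterS (open_nbhs_nbhs (conj openV0 V0p0)) => q V0q.
  have Mq : M q = M p0 + b *m (q - p0) by rewrite /M mulmxBr addrCA addrK addrC.
  rewrite s_coef_linearized // Mq invmx_rank1_update_mul -?Mq ?unitM //.
  by rewrite mxE mulrC mulNr.
have -> : pd j (s_coef F i) p0 = pd j (fun q => - beta i 0 * (psi q)^-1) p0.
  exact: near_eq_derive (s_near i).
have dpsi : differentiable psi p0 by exact: differentiable_affine_form.
have psi0 : psi p0 != 0 by rewrite psi_p0 oner_eq0.
have s_p0 k : s_coef F k p0 = - beta k 0.
  by rewrite (nbhs_singleton (s_near k)) psi_p0 invr1 mulr1.
rewrite pd_mull; last exact: differentiableV.
rewrite pd_inv // /psi pd_affine_form -/psi !s_p0 psi_p0 expr1n invr1.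
by ring.
Qed.

End Linearized.

Section FlatCase.
Hypotheses (openU : open U)
  (a0 : forall (i j k : 'I_n) p, U p -> a_coef F i j k p = 0)
  (flat : forall (i j : 'I_n) p, U p ->
     pd j (s_coef F i) p - s_coef F i p * s_coef F j p = 0).
Variables (p0 : V) (r : R).
Hypotheses (r_gt0 : 0 < r) (ballU : ball p0 r `<=` U).

Let Up0 : U p0. Proof. exact/ballU/ballxx. Qed.
Let scol q : 'cV[R]_n := \col_i s_coef F i q.
Let psi := affine_form p0 (- scol p0).

Lemma pd_s_smooth i j q : U q -> pd j (s_smooth i) q = s_smooth i q * s_smooth j q.
Proof.
move=> Uq; have Unear : \forall x \near q, U x by exact: open_nbhs_nbhs.
have -> : pd j (s_smooth i) q = pd j (s_coef F i) q.
  by apply: near_eq_derive; apply: filterS Unear => x Ux; rewrite s_coef_smooth.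
by apply/eqP; rewrite -!s_coef_smooth // -subr_eq0 flat.
Qed.

(* Flatness says that [s_i psi - s_i(p0)] solves a linear first-order system
   vanishing at [p0]. *)
Lemma s_smooth_mul_psi i q : ball p0 r q -> s_smooth i q * psi q = scol p0 i 0.
Proof.
move=> bq; apply/eqP; rewrite -subr_eq0; apply/eqP; move: i q bq.
apply: (pd_linear_system_zero (sig := s_smooth)).
- move=> i q /ballU Uq; apply: differentiableB; last exact: differentiable_cst.
  by apply: differentiableM; [exact: differentiable_s_smooth | exact: differentiable_affine_form].
- by move=> i q /ballU; exact: differentiable_s_smooth.
- move=> i j q /ballU Uq.
  rewrite pd_addr; last by apply: differentiableM;
    [exact: differentiable_s_smooth | exact: differentiable_affine_form].
  rewrite pd_mul ?pd_s_smooth ?pd_affine_form //; last first.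
  + exact: differentiable_affine_form.
  + exact: differentiable_s_smooth.
  by rewrite mxE; ring.
- move=> i; rewrite /psi /affine_form subrr mul0mx mxE addr0 mulr1.
  by rewrite -s_coef_smooth // mxE subrr.
Qed.

Lemma psi_mul_scol q : ball p0 r q -> psi q * (1 + ((q - p0) *m scol q) 0 0) = 1.
Proof.
move=> bq; have Uq := ballU bq.
rewrite mulrDr mulr1 {1}/psi /affine_form -[RHS]addr0 -addrA; congr (_ + _).
rewrite !mxE mulr_sumr -big_split /= big1 // => l _.
rewrite !mxE (s_coef_smooth l Uq) mulrCA (mulrC (psi q)) s_smooth_mul_psi //.
by rewrite mxE; ring.
Qed.

Let M q := (1%:M - (- scol p0) *m p0) + (- scol p0) *m q.

Let M_shift q : M q = 1%:M + (- scol p0) *m (q - p0).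
Proof. by rewrite /M mulmxBr addrAC addrA. Qed.

Lemma unitmx_M q : ball p0 r q -> M q \in unitmx.
Proof.
move=> bq; rewrite M_shift; apply: unitmx_rank1_update.
apply/eqP => psi0; have := psi_mul_scol bq.
by rewrite /psi /affine_form psi0 mul0r => /eqP; rewrite eq_sym oner_eq0.
Qed.

Lemma M_mul_scol q : ball p0 r q -> M q *m scol q = - - scol p0.
Proof.
move=> bq; have Uq := ballU bq.
rewrite M_shift mulmxDl mul1mx -mulmxA [_ *m scol q]mx11_scalar mul_mx_scalar opprK.
have := psi_mul_scol bq; set sigma := (_ *m _) 0 0 => psi_sigma.
apply/matrixP => i j; rewrite (ord1 j) !mxE.
have := s_smooth_mul_psi i bq; rewrite mxE -s_coef_smooth // => <-.
apply/eqP; rewrite -subr_eq0; apply/eqP.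
transitivity (s_coef F i q * (1 - psi q * (1 + sigma))); first by ring.
by rewrite psi_sigma subrr mulr0.
Qed.

Let G q := M q *m F q *m (M q)^T.
Let gam k q := c_smooth k q + 2 * s_smooth k q.

Lemma pdmx_congruence_flat k q : ball p0 r q -> pdmx k G q = gam k q *: G q.
Proof.
move=> bq; have Uq := ballU bq.
rewrite /G /M pdmx_congruence_affine -/(M q); last exact: diffF.
apply/(congruence_conformal _ _ _ _ (unitmx_M bq) (M_mul_scol bq)).
rewrite /gam -c_coef_smooth // -s_coef_smooth //.
by apply: conformal_of_a_coef => // i j k'; exact: a0.
Qed.

Lemma linearizable_on_ball : linearizable_on F (ball p0 r).
Proof.
exists (1%:M - (- scol p0) *m p0), (- scol p0), (- p0), 1.
split; first exact: det_block_affine_shear.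
have G_p0 : G p0 = F p0 by rewrite /G M_shift subrr mulmx0 addr0 trmx1 mul1mx mulmx1.
have [a [b Fab0]] := mx_neq0_entry (unitmx_neq0 (ltnW n_ge2) (unitF Up0)).
rewrite -G_p0 in Fab0.
exists (G p0), (fun q => \det (M q) * (G q a b / G p0 a b)) => q bq.
split; first exact: unitmx_M.
rewrite /Ftrans -/(M q) -/(G q) -scalerA; congr (_ *: _).
apply: (proportional_of_pdmx (gam := gam) _ _ _ Fab0 bq) => [q' bq' | k q' bq' | k q' bq'].
- apply: mx_differentiable_mul; last exact/mx_differentiable_tr/mx_differentiable_affine.
  by apply: mx_differentiable_mul; [exact: mx_differentiable_affine | exact/diffF/ballU].
- apply: differentiableD; first exact/differentiable_c_smooth/ballU.
  by apply: differentiableM; [exact: differentiable_cst | exact/differentiable_s_smooth/ballU].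
- exact: pdmx_congruence_flat.
Qed.

End FlatCase.

End LinearizationCriterion.

Theorem proposition1 (R : realType) (n : nat) (hn : (2 <= n)%N)
  (U : set 'rV[R]_n) (F : 'rV[R]_n -> 'M[R]_n)
  (hU : open U)
  (hsmooth : forall i j : 'I_n, smooth_on U (fent F i j))
  (hsym : forall p, U p -> (F p)^T = F p)
  (hnondeg : forall p, U p -> F p \in unitmx) :
  (forall p0, U p0 -> exists V : set 'rV[R]_n,
       [/\ open V, V p0, V `<=` U & linearizable_on F V]) <->
  ((forall (i j k : 'I_n) p, U p -> a_coef F i j k p = 0) /\
   (forall (i j : 'I_n) p, U p ->
      pd j (s_coef F i) p - s_coef F i p * s_coef F j p = 0)).
Proof.
split=> [lin | [a0 flat] p0 Up0].
  split=> [i j k | i j] p Up;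
    have [V0 [openV0 V0p V0U [C [b [c [beta [_ [K [lam linV0]]]]]]]]] := lin p Up.
  - exact: (a_coef_linearized hn hsmooth hsym hnondeg openV0 V0U linV0).
  - exact: (flat_linearized hn hsmooth hsym hnondeg openV0 V0U linV0).
have /nbhs_ballP[r r_gt0 ballU] : nbhs p0 U by exact: open_nbhs_nbhs.
exists (ball p0 r); split; [exact: ball_open | exact: ballxx | exact: ballU |].
exact: (linearizable_on_ball hn hsmooth hsym hnondeg hU a0 flat r_gt0 ballU).
Qed.
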